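(* Let $G$ be a finite simple graph on the vertex set $\{1,\dots,n\}$ without cycles of length $3$. Then $E_3^{0,1}(G)=0$, $E_3^{0,2}(G)=0$ and $E_3^{1,1}(G)=0$.
   Context: Let $E$ be a complex elliptic curve, $x,y$ a basis of $H^1(E;\mathbb{Q})$ with $xy$ generating $H^2$. Let $E_2(n)$ be the quotient of the free graded-commutative algebra (for total degree) over $\mathbb{Q}$ on $x_i,y_i$ ($1\le i\le n$) of bidegree $(1,0)$ (pullbacks of $x,y$ along the $i$-th projection $E^n\to E$) and $\omega_{ij}=\omega_{ji}$ ($i\ne j$) of bidegree $(0,1)$ by the relations $(x_i-x_j)\omega_{ij}=0$, $(y_i-y_j)\omega_{ij}=0$, $\omega_{ij}\omega_{jk}+\omega_{jk}\omega_{ki}+\omega_{ki}\omega_{ij}=0$ (distinct $i,j,k$), with the derivation $d_2$ of bidegree $(2,-1)$, $d_2x_i=d_2y_i=0$, $d_2\omega_{ij}=(x_i-x_j)(y_i-y_j)$. For a graph $G$ with edge set $\mathcal{E}$, the graphic elliptic arrangement has complement $M(G)=\{P\in E^n\mid P_i\ne P_j \text{ for all } \{i,j\}\in\mathcal{E}\}$; the second page of the rational Leray spectral sequence of $M(G)\hookrightarrow E^n$ is $E_2(G)$, the sub-differential bigraded algebra of $E_2(n)$ generated by all $x_i,y_i$ and the $\omega_{ij}$ with $\{i,j\}\in\mathcal{E}$. $E_3^{p,q}(G)$ denotes the $d_2$-cohomology of $E_2(G)$ in bidegree $(p,q)$. *)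

(* Concrete model of the bigraded algebra E_2(n) over Q:
   all generators x_i, y_i, omega_ij have total degree 1, so the free
   graded-commutative algebra on them is the exterior algebra, modelled
   here as Q-valued functions on finite sets of generators (basis element
   for S = ordered wedge of the generators in S, order = enum_rank). *)
From HB Require Import structures.
From mathcomp Require Import all_boot all_order all_algebra.
Set Implicit Arguments.
Unset Strict Implicit.
Unset Printing Implicit Defensive.
Import GRing.Theory.
Local Open Scope ring_scope.

(* Generators: inl (i,false) = x_i, inl (i,true) = y_i,
   inr (i,j) with i < j = omega_ij = omega_ji. *)
Definition Gen (n : nat) : finType :=
  ('I_n * bool + {p : 'I_n * 'I_n | (p.1 < p.2)%N})%type.

Notation Alg n := {ffun {set Gen n} -> rat}.

Section Ext.
Variable n : nat.
Local Notation G := (Gen n).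
Local Notation A := (Alg n).

Definition ascale (c : rat) (a : A) : A := [ffun U => c * a U].

Definition grank (g : G) : nat := enum_rank g.

(* sign of reordering (wedge of S) * (wedge of T) into wedge of S :|: T *)
Definition gsign (S T : {set G}) : rat :=
  (-1) ^+ #|[set p : G * G | [&& p.1 \in S, p.2 \in T & (grank p.2 < grank p.1)%N]]|.

Definition amul (a b : A) : A :=
  [ffun U => \sum_(S : {set G}) \sum_(T : {set G})
     if [&& S :&: T == set0 & S :|: T == U] then gsign S T * a S * b T else 0].

Definition mono (S : {set G}) : A := [ffun U => (U == S)%:R].
Definition gen (g : G) : A := mono [set g].

Definition xg (i : 'I_n) : A := gen (inl (i, false)).
Definition yg (i : 'I_n) : A := gen (inl (i, true)).

Definition isW (i j : 'I_n) (g : G) : bool :=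
  if g is inr p then (val p == (i, j)) || (val p == (j, i)) else false.

(* omega_ij (= omega_ji); only used for i != j *)
Definition omega (i j : 'I_n) : A := \sum_(g | isW i j g) gen g.

Definition isXY (g : G) : bool := if g is inl _ then true else false.

Definition dgen (g : G) : A :=
  match g with
  | inl _ => 0
  | inr p => amul (xg (val p).1 - xg (val p).2) (yg (val p).1 - yg (val p).2)
  end.

(* extension of d_2 as a derivation of total degree 1 (graded Leibniz rule) *)
Definition dmono (S : {set G}) : A :=
  \sum_(g in S)
    ascale ((-1) ^+ #|[set h in S | (grank h < grank g)%N]|)
     (amul (amul (mono [set h in S | (grank h < grank g)%N]) (dgen g))
           (mono [set h in S | (grank g < grank h)%N])).

Definition d2 (a : A) : A := \sum_(S : {set G}) ascale (a S) (dmono S).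

Definition homog (p q : int) (a : A) : Prop :=
  forall U : {set G}, a U != 0 ->
    #|[set g in U | isXY g]|%:Z = p /\ #|[set g in U | ~~ isXY g]|%:Z = q.

Definition is_rel (r : A) : Prop :=
  (exists i j : 'I_n, i != j /\
     (r = amul (xg i - xg j) (omega i j) \/ r = amul (yg i - yg j) (omega i j)))
  \/ (exists i j k : 'I_n, [/\ i != j, j != k & k != i] /\
     r = amul (omega i j) (omega j k) + amul (omega j k) (omega k i)
         + amul (omega k i) (omega i j)).

Definition in_I (a : A) : Prop :=
  exists s : seq (A * A * A), (forall t, t \in s -> is_rel t.1.2) /\
    a = \sum_(t <- s) amul (amul t.1.1 t.1.2) t.2.

Definition allowed (e : rel 'I_n) (g : G) : bool :=
  match g with inl _ => true | inr p => e (val p).1 (val p).2 end.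

(* a represents an element of E_2(G)^{p,q} (its image in E_2(n)) *)
Definition inE2 (e : rel 'I_n) (p q : int) (a : A) : Prop :=
  homog p q a /\ forall U : {set G}, a U != 0 -> U \subset [set g | allowed e g].

(* E_3^{p,q}(G) = 0: every d_2-cocycle in E_2(G)^{p,q} is d_2 of an element
   of E_2(G)^{p-2,q+1}, equalities taken in E_2(n) (i.e. modulo the ideal). *)
Definition E3_vanishes (e : rel 'I_n) (p q : int) : Prop :=
  forall a : A, inE2 e p q a -> in_I (d2 a) ->
    exists b : A, inE2 e (p - 2) (q + 1) b /\ in_I (a - d2 b).

End Ext.

(* Coefficients of the exterior algebra at a set U of generators that contains
   at most one omega_q, and no x or y at an endpoint of that omega_q, vanish on
   the ideal of relations, since every relation is supported on monomials
   outside this family.  Reading the cocycle condition d_2 a = 0 in E_2(n) at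
   such test sets isolates one or two coefficients of a.  In bidegrees (0,1)
   and (0,2) this forces a = 0; in bidegree (0,2), at the test set
   omega_h x_i y_i, a second term omega_g' omega_h could only contribute
   through a triangle.  In bidegree (1,1) it shows that the coefficient of
   z_v omega_q vanishes unless v is an endpoint of q (test at x_v x_w y_u,
   where u is an endpoint of q not adjacent to v, which exists as there are
   no triangles), and that the coefficients at the two endpoints of q are
   opposite; hence a is a combination of the relations (x_k - x_l) omega_kl
   and (y_k - y_l) omega_kl.  In each case a is cohomologous to 0. *)

From mathcomp Require Import all_boot all_order all_algebra.

Set Implicit Arguments.
Unset Strict Implicit.
Unset Printing Implicit Defensive.
Import GRing.Theory.
Local Open Scope ring_scope.

Lemma set3D1l (T : finType) (x y w : T) : x != y -> x != w -> [set x; y; w] :\ x = [set y; w].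
Proof.
move=> xy xw; apply/setP => g; rewrite !inE.
by case: (g =P x) => [->|_]; rewrite ?eqxx ?(negbTE xy) ?(negbTE xw).
Qed.

Lemma set3D1m (T : finType) (x y w : T) : y != x -> y != w -> [set x; y; w] :\ y = [set x; w].
Proof.
move=> yx yw; apply/setP => g; rewrite !inE.
by case: (g =P y) => [->|_]; rewrite ?eqxx ?(negbTE yx) ?(negbTE yw) ?orbF.
Qed.

Lemma set3D1r (T : finType) (x y w : T) : w != x -> w != y -> [set x; y; w] :\ w = [set x; y].
Proof.
move=> wx wy; apply/setP => g; rewrite !inE.
by case: (g =P w) => [->|_]; rewrite ?eqxx ?(negbTE wx) ?(negbTE wy) ?orbF.
Qed.

Section E2.
Variable n : nat.
Local Notation G := (Gen n).
Local Notation A := (Alg n).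
Local Notation Edge := {p : 'I_n * 'I_n | (p.1 < p.2)%N}.
Local Notation xgen a := (inl (a, false) : G).
Local Notation ygen a := (inl (a, true) : G).
Local Notation wgen q := (inr q : G).

(** * Products and signs in the exterior algebra *)

Lemma grank_inl_lt_inr (u : 'I_n * bool) (q : Edge) :
  (grank (inl u : G) < grank (wgen q))%N.
Proof.
have grankE (g : G) : grank g = index g (enum G).
  rewrite /grank -{2}(nth_enum_rank g g) index_uniq ?enum_uniq //.
  by rewrite -cardE ltn_ord.
rewrite !grankE enumT unlock /= /sum_enum !index_cat.
have hu : (inl u : G) \in [seq inl x | x <- Finite.enum ('I_n * bool)%type].
  by rewrite map_f // -enumT mem_enum.
have hq : wgen q \notin [seq inl x | x <- Finite.enum ('I_n * bool)%type].
  by apply/mapP => -[].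
by rewrite hu (negbTE hq) (leq_trans _ (leq_addr _ _)) // index_mem.
Qed.

Lemma eq_grank (g h : G) : (grank g == grank h) = (g == h).
Proof. by rewrite /grank -(inj_eq enum_rank_inj). Qed.

Lemma inl_eq (u v : 'I_n * bool) : (inl u == inl v :> G) = (u == v).
Proof. by apply/eqP/eqP => [[]|->]. Qed.

Lemma inr_eq (q q' : Edge) : (wgen q == wgen q') = (q == q').
Proof. by apply/eqP/eqP => [[]|->]. Qed.

Lemma disjoint_setU_eq (B T V : {set G}) :
  (B :&: T == set0) && (B :|: T == V) = (B \subset V) && (T == V :\: B).
Proof.
apply/andP/andP => [[/eqP hI /eqP hU]|[hBV /eqP ->]].
  split; first by rewrite -hU subsetUl.
  apply/eqP/setP => x; rewrite -hU !inE.
  by move/setP: hI => /(_ x); rewrite !inE; case: (x \in B) => //= ->.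
split; apply/eqP/setP => x; rewrite !inE; first by case: (x \in B).
by case xB: (x \in B); rewrite //= (subsetP hBV x xB).
Qed.

Lemma amul_mono_l (B : {set G}) (c : A) V :
  amul (mono B) c V = if B \subset V then gsign B (V :\: B) * c (V :\: B) else 0.
Proof.
rewrite ffunE (bigD1 B) //= [X in _ + X]big1 => [|S SB]; last first.
  by apply: big1 => T _; rewrite ffunE (negbTE SB); case: ifP; rewrite ?mulr0 ?mul0r.
rewrite addr0; case: ifP => hBV; last by apply: big1 => T _; rewrite disjoint_setU_eq hBV.
rewrite (bigD1 (V :\: B)) //= [X in _ + X]big1 => [|T hT].
  by rewrite disjoint_setU_eq hBV eqxx /= ffunE eqxx mulr1 addr0.
by rewrite disjoint_setU_eq hBV (negbTE hT).
Qed.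

Lemma amul_mono_r (c : A) (C : {set G}) V :
  amul c (mono C) V = if C \subset V then gsign (V :\: C) C * c (V :\: C) else 0.
Proof.
rewrite ffunE (eq_bigr (fun S =>
    if [&& S :&: C == set0 & S :|: C == V] then gsign S C * c S else 0)); last first.
  move=> S _; rewrite (bigD1 C) //= [X in _ + X]big1 => [|T TC].
    by rewrite addr0 ffunE eqxx mulr1.
  by rewrite ffunE (negbTE TC); case: ifP; rewrite ?mulr0.
case: ifP => hCV; last first.
  by apply: big1 => T _; rewrite setIC setUC disjoint_setU_eq hCV.
rewrite (bigD1 (V :\: C)) //= [X in _ + X]big1 => [|T hT].
  by rewrite setIC setUC disjoint_setU_eq hCV eqxx /= addr0 mulrC.
by rewrite setIC setUC disjoint_setU_eq hCV (negbTE hT).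
Qed.

Lemma amulDl (a b c : A) : amul (a + b) c = amul a c + amul b c.
Proof.
apply/ffunP => U; rewrite !ffunE -big_split; apply: eq_bigr => S _.
rewrite -big_split; apply: eq_bigr => T _; case: ifP => _; rewrite ?addr0 //.
by rewrite ffunE mulrDr mulrDl.
Qed.

Lemma amulDr (a b c : A) : amul a (b + c) = amul a b + amul a c.
Proof.
apply/ffunP => U; rewrite !ffunE -big_split; apply: eq_bigr => S _.
rewrite -big_split; apply: eq_bigr => T _; case: ifP => _; rewrite ?addr0 //.
by rewrite ffunE mulrDr.
Qed.

Lemma amulNl (a c : A) : amul (- a) c = - amul a c.
Proof.
apply/ffunP => U; rewrite !ffunE -sumrN; apply: eq_bigr => S _.
rewrite -sumrN; apply: eq_bigr => T _; case: ifP => _; rewrite ?oppr0 //.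
by rewrite ffunE mulrN mulNr.
Qed.

Lemma amulNr (a c : A) : amul a (- c) = - amul a c.
Proof.
apply/ffunP => U; rewrite !ffunE -sumrN; apply: eq_bigr => S _.
rewrite -sumrN; apply: eq_bigr => T _; case: ifP => _; rewrite ?oppr0 //.
by rewrite ffunE mulrN.
Qed.

Lemma amulBl (a b c : A) : amul (a - b) c = amul a c - amul b c.
Proof. by rewrite amulDl amulNl. Qed.

Lemma amulBr (a b c : A) : amul a (b - c) = amul a b - amul a c.
Proof. by rewrite amulDr amulNr. Qed.

Lemma amul0l (c : A) : amul 0 c = 0.
Proof.
apply/ffunP => U; rewrite !ffunE big1 // => S _; rewrite big1 // => T _.
by case: ifP => _ //; rewrite ffunE mulr0 mul0r.
Qed.

Lemma amul0r (c : A) : amul c 0 = 0.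
Proof.
apply/ffunP => U; rewrite !ffunE big1 // => S _; rewrite big1 // => T _.
by case: ifP => _ //; rewrite ffunE mulr0.
Qed.

Lemma amulZl k (a c : A) : amul (ascale k a) c = ascale k (amul a c).
Proof.
apply/ffunP => U; rewrite !ffunE mulr_sumr; apply: eq_bigr => S _.
rewrite mulr_sumr; apply: eq_bigr => T _; case: ifP => _; rewrite ?mulr0 //.
by rewrite ffunE mulrCA !mulrA.
Qed.

Lemma amul_suml I (r : seq I) (P : pred I) (F : I -> A) c :
  amul (\sum_(i <- r | P i) F i) c = \sum_(i <- r | P i) amul (F i) c.
Proof. exact: (big_morph (fun a => amul a c) (fun a b => amulDl a b c) (amul0l c)). Qed.

Lemma amul_sumr I (r : seq I) (P : pred I) (F : I -> A) c :
  amul c (\sum_(i <- r | P i) F i) = \sum_(i <- r | P i) amul c (F i).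
Proof. exact: (big_morph (fun a => amul c a) (fun a b => amulDr c a b) (amul0r c)). Qed.

Lemma coefB (f g : A) U : (f - g) U = f U - g U.
Proof. by rewrite !ffunE. Qed.

Definition inversions (S T : {set G}) :=
  [set p : G * G | [&& p.1 \in S, p.2 \in T & (grank p.2 < grank p.1)%N]].

Lemma gsignE (S T : {set G}) : gsign S T = (-1) ^+ #|inversions S T|.
Proof. by []. Qed.

Lemma gsign_ordered (S T : {set G}) :
  (forall s t, s \in S -> t \in T -> (grank s < grank t)%N) -> gsign S T = 1.
Proof.
move=> ST; rewrite gsignE.
suff -> : inversions S T = set0 by rewrite cards0 expr0.
apply/setP => -[s t]; rewrite !inE /=; apply/and3P => -[hs ht].
by rewrite ltnNge ltnW ?ST.
Qed.

Lemma gsign0l (T : {set G}) : gsign set0 T = 1.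
Proof. by apply: gsign_ordered => s t; rewrite inE. Qed.

Lemma gsign0r (S : {set G}) : gsign S set0 = 1.
Proof. by apply: gsign_ordered => s t _; rewrite inE. Qed.

Lemma gsign_neq0 (S T : {set G}) : gsign S T != 0.
Proof. by rewrite signr_eq0. Qed.

Lemma gsign_set1 (g h : G) : gsign [set g] [set h] = (-1) ^+ (grank h < grank g)%N.
Proof.
rewrite gsignE; congr (_ ^+ _).
case: ltnP => hg /=; last first.
  apply/eqP; rewrite cards_eq0; apply/eqP/setP => -[s t]; rewrite !inE /=.
  by case: eqP => [->|] //=; case: eqP => [->|] //=; rewrite ltnNge hg.
rewrite -(cards1 (g, h)); apply: eq_card => -[s t].
by rewrite !inE /= xpair_eqE; case: eqP => [->|] //=; case: eqP => [->|] //=; rewrite hg.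
Qed.

Lemma gsign_swap1 (g h : G) : g != h -> gsign [set g] [set h] = - gsign [set h] [set g].
Proof.
rewrite !gsign_set1 -eq_grank.
by case: ltngtP => //= _ _; rewrite ?expr1 ?expr0 ?opprK.
Qed.

Lemma gsign_setUr (S T1 T2 : {set G}) : T1 :&: T2 = set0 ->
  gsign S (T1 :|: T2) = gsign S T1 * gsign S T2.
Proof.
move=> T12; rewrite !gsignE -exprD -cardsUI.
have -> : inversions S T1 :&: inversions S T2 = set0.
  apply/setP => -[s t]; rewrite /inversions !inE /=.
  by move/setP: T12 => /(_ t); rewrite !inE; case: (t \in T1); case: (t \in T2); rewrite ?andbF.
rewrite cards0 addn0; congr (_ ^+ _); apply: eq_card => -[s t]; rewrite /inversions !inE /=.
by case: (s \in S); case: (t \in T1); case: (t \in T2); case: (grank t < grank s)%N.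
Qed.

Lemma gsign_set1_set2 (g h k : G) : h != k ->
  gsign [set g] [set h; k] = gsign [set g] [set h] * gsign [set g] [set k].
Proof.
move=> hk; rewrite gsign_setUr //; apply/setP => x; rewrite !inE.
by case: eqP => [->|]; rewrite ?(negbTE hk) ?andbF.
Qed.

(* gsign [set g] [set h; k] * gsign [set h] [set k] is the sign sorting the word g h k. *)
Lemma gsign_swap3 (g h k : G) : g != h -> h != k -> g != k ->
  gsign [set g] [set h; k] * gsign [set h] [set k]
  = - (gsign [set h] [set g; k] * gsign [set g] [set k]).
Proof.
move=> gh hk gk; rewrite !gsign_set1_set2 // (gsign_swap1 gh).
by rewrite !mulNr mulrAC.
Qed.

Lemma mono_set0_l (c : A) : amul (mono set0) c = c.
Proof. by apply/ffunP => V; rewrite amul_mono_l sub0set setD0 gsign0l mul1r. Qed.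

Lemma mono_set0_r (c : A) : amul c (mono set0) = c.
Proof. by apply/ffunP => V; rewrite amul_mono_r sub0set setD0 gsign0r mul1r. Qed.

Lemma amul_gen (g h : G) V : amul (gen g) (gen h) V =
  if (g != h) && (V == [set g; h]) then gsign [set g] [set h] else 0.
Proof.
rewrite /gen amul_mono_l sub1set ffunE.
case: (boolP (g \in V)) => gV /=; last first.
  by case: ifP => // /andP[_ /eqP hV]; rewrite hV !inE eqxx in gV.
case: (boolP (g == h)) => [/eqP <-|gh] /=.
  case: eqP => [E|]; last by rewrite mulr0.
  by have := setD11 g V; rewrite E inE eqxx.
case: (boolP (V :\ g == [set h])) => [/eqP E|E].
  by rewrite -[X in X == _](setD1K gV) E eqxx mulr1.
rewrite mulr0; case: eqP => // hV.
by rewrite hV setU1K ?inE // eqxx in E.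
Qed.

(** * Edges and d_2 *)

Definition on_edge (a : 'I_n) (q : Edge) := (a == (val q).1) || (a == (val q).2).

Definition other_end (a : 'I_n) (q : Edge) := if a == (val q).1 then (val q).2 else (val q).1.

Lemma edge_neq (q : Edge) : (val q).1 != (val q).2.
Proof. by case: q => [[k l] /= kl]; apply/eqP => E; rewrite E ltnn in kl. Qed.

Lemma on_edge1 (q : Edge) : on_edge (val q).1 q.
Proof. by rewrite /on_edge eqxx. Qed.

Lemma on_edge2 (q : Edge) : on_edge (val q).2 q.
Proof. by rewrite /on_edge eqxx orbT. Qed.

Lemma on_edge_uniq (q q' : Edge) a c : a != c ->
  on_edge a q -> on_edge c q -> on_edge a q' -> on_edge c q' -> q = q'.
Proof.
have ends (r : Edge) : on_edge a r -> on_edge c r -> a != c ->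
    val r = if (a < c)%N then (a, c) else (c, a).
  case: r => [[k l] /= kl]; rewrite /on_edge /=.
  case/orP => /eqP ->; case/orP => /eqP -> //; rewrite ?eqxx // => _.
    by rewrite kl.
  by rewrite ltnNge (ltnW kl).
by move=> ac ha hc ha' hc'; apply: val_inj; rewrite !ends.
Qed.

Lemma other_end_on (a : 'I_n) (q : Edge) : on_edge (other_end a q) q.
Proof. by rewrite /other_end; case: ifP => _; rewrite ?on_edge1 ?on_edge2. Qed.

Lemma other_end_neq (a : 'I_n) (q : Edge) : on_edge a q -> other_end a q != a.
Proof.
move=> aq; have kl := edge_neq q; rewrite /other_end.
case/orP: aq => /eqP ->; first by rewrite eqxx /= eq_sym.
by rewrite ifN_eqC.
Qed.

Lemma other_end1 (q : Edge) : other_end (val q).1 q = (val q).2.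
Proof. by rewrite /other_end eqxx. Qed.

Lemma other_end2 (q : Edge) : other_end (val q).2 q = (val q).1.
Proof. by rewrite /other_end ifN_eqC // edge_neq. Qed.

Lemma on_edge_other (a c : 'I_n) (q : Edge) :
  on_edge a q -> on_edge c q -> c = a \/ c = other_end a q.
Proof.
rewrite /on_edge /other_end => /orP [] /eqP -> /orP [] /eqP ->; rewrite ?eqxx; auto.
by rewrite ifN_eqC ?edge_neq; auto.
Qed.

Lemma edge_rel (e : rel 'I_n) (q : Edge) a c : symmetric e -> e (val q).1 (val q).2 ->
  a != c -> on_edge a q -> on_edge c q -> e a c.
Proof.
rewrite /on_edge => e_sym ekl ac.
case/orP => /eqP ea; case/orP => /eqP ec; subst a c; rewrite ?eqxx // in ac.
by rewrite e_sym.
Qed.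

Lemma xgen_neq_ygen (a c : 'I_n) : (xgen a == ygen c) = false.
Proof. by rewrite inl_eq xpair_eqE andbF. Qed.

Lemma set2_xy_eq (a b c d : 'I_n) :
  ([set xgen a; ygen b] == [set xgen c; ygen d]) = (a == c) && (b == d).
Proof.
apply/eqP/andP => [E|[/eqP-> /eqP->]//].
have /[!inE] xa : xgen a \in [set xgen c; ygen d] by rewrite -E setU11.
have /[!inE] yb : ygen b \in [set xgen c; ygen d] by rewrite -E !inE eqxx orbT.
by rewrite !inl_eq !xpair_eqE /= ?andbT ?andbF ?orbF /= in xa yb; rewrite xa yb.
Qed.

Lemma dgen_wgen (q : Edge) V : dgen (wgen q) V =
  let k := (val q).1 in let l := (val q).2 in
  amul (gen (xgen k)) (gen (ygen k)) V - amul (gen (xgen k)) (gen (ygen l)) V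
  - (amul (gen (xgen l)) (gen (ygen k)) V - amul (gen (xgen l)) (gen (ygen l)) V).
Proof. by rewrite /dgen amulBl !amulBr !ffunE. Qed.

Lemma dgen_xy (q : Edge) (a c : 'I_n) : on_edge a q -> on_edge c q ->
  dgen (wgen q) [set xgen a; ygen c] = (-1) ^+ (a != c) * gsign [set xgen a] [set ygen c].
Proof.
have kl := edge_neq q; have lk := kl; rewrite eq_sym in lk.
rewrite /on_edge dgen_wgen /= !amul_gen !xgen_neq_ygen /= !set2_xy_eq.
by case/orP => /eqP ->; case/orP => /eqP ->; rewrite ?eqxx ?(negbTE kl) ?(negbTE lk) /=;
  rewrite ?subr0 ?sub0r ?opprK ?mul1r ?mulN1r.
Qed.

Lemma dgen_neq0P (q : Edge) U : dgen (wgen q) U != 0 ->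
  exists a c, [/\ on_edge a q, on_edge c q & U = [set xgen a; ygen c]].
Proof.
rewrite dgen_wgen /= !amul_gen !xgen_neq_ygen /=.
set k := (val q).1; set l := (val q).2.
have [hk hl] : on_edge k q /\ on_edge l q by rewrite on_edge1 on_edge2.
case: (U =P [set xgen k; ygen k]) => [->|_]; first by exists k, k.
case: (U =P [set xgen k; ygen l]) => [->|_]; first by exists k, l.
case: (U =P [set xgen l; ygen k]) => [->|_]; first by exists l, k.
case: (U =P [set xgen l; ygen l]) => [->|_]; first by exists l, l.
by rewrite !subrr eqxx.
Qed.

Lemma dgen_xy_neq0 (q : Edge) (a c : 'I_n) :
  (dgen (wgen q) [set xgen a; ygen c] != 0) = on_edge a q && on_edge c q.
Proof.
apply/idP/andP => [/dgen_neq0P [a' [c' [ha hc /eqP]]]|[ha hc]].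
  by rewrite set2_xy_eq => /andP [/eqP -> /eqP ->].
by rewrite dgen_xy // mulf_neq0 ?signr_eq0 ?gsign_neq0.
Qed.

Lemma dgen_zz (q : Edge) (a c : 'I_n) (b : bool) : on_edge a q -> on_edge c q ->
  dgen (wgen q) [set inl (a, b); inl (c, ~~ b)]
  = (-1) ^+ b * ((-1) ^+ (a != c) * gsign [set inl (a, b)] [set inl (c, ~~ b)]).
Proof.
move=> ha hc; case: b => /=; last by rewrite dgen_xy // mul1r.
rewrite setUC dgen_xy // eq_sym gsign_swap1 ?inl_eq ?xpair_eqE ?andbF //.
by rewrite mulN1r mulrN.
Qed.

Lemma d2_coef (a : A) U : d2 a U = \sum_(S : {set G}) a S * dmono S U.
Proof. by rewrite /d2 sum_ffunE; apply: eq_bigr => S _; rewrite ffunE. Qed.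

Definition below (S : {set G}) (t : G) := [set h in S | (grank h < grank t)%N].

Definition above (S : {set G}) (t : G) := [set h in S | (grank t < grank h)%N].

Definition dterm (S : {set G}) (t : G) : A :=
  ascale ((-1) ^+ #|below S t|) (amul (amul (mono (below S t)) (dgen t)) (mono (above S t))).

Lemma dmono_coef (S U : {set G}) : dmono S U = \sum_(t in S) dterm S t U.
Proof. by rewrite /dmono sum_ffunE. Qed.

Lemma dterm_coef (S : {set G}) (t : G) U : dterm S t U =
  if S :\ t \subset U then
    (-1) ^+ #|below S t| * gsign (U :\: above S t) (above S t)
      * gsign (below S t) (U :\: above S t :\: below S t) * dgen t (U :\: (S :\ t))
  else 0.
Proof.
have split : S :\ t = above S t :|: below S t.
  apply/setP => h; rewrite !inE -eq_grank.
  by case: ltngtP; rewrite ?andbF ?orbF ?andbT.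
have disj : [disjoint below S t & above S t].
  by rewrite -setI_eq0; apply/eqP/setP => h; rewrite !inE; case: ltngtP; rewrite ?andbF.
rewrite ffunE amul_mono_r amul_mono_l split subUset subsetD disj andbT.
case: (above S t \subset U) => /=; last by rewrite mulr0.
case: (below S t \subset U) => /=; last by rewrite !mulr0.
by rewrite setDDl !mulrA.
Qed.

Lemma dterm_neq0 (S : {set G}) (t : G) U :
  (dterm S t U != 0) = (S :\ t \subset U) && (dgen t (U :\: (S :\ t)) != 0).
Proof.
rewrite dterm_coef; case: ifP => _ /=; last by rewrite ?eqxx.
by rewrite !mulf_eq0 !negb_or signr_eq0 !gsign_neq0.
Qed.

Lemma dmono_neq0P (S U : {set G}) : dmono S U != 0 ->
  exists2 t, t \in S & (S :\ t \subset U) && (dgen t (U :\: (S :\ t)) != 0).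
Proof.
rewrite dmono_coef => h.
have [t /andP [tS ht]|none] := pickP (fun t => (t \in S) && (dterm S t U != 0)).
  by exists t; rewrite // -dterm_neq0.
move: h; rewrite big1 ?eqxx // => t tS.
by apply/eqP; move: (none t); rewrite tS /= => /negbFE.
Qed.

Lemma dmono_neq0 (S U : {set G}) (t : G) : t \in S ->
  S :\ t \subset U -> dgen t (U :\: (S :\ t)) != 0 ->
  (forall t', t' \in S -> t' != t -> ~~ (S :\ t' \subset U)) -> dmono S U != 0.
Proof.
move=> tS sub ht others; rewrite dmono_coef (bigD1 t) //= big1 ?addr0.
  by rewrite dterm_neq0 sub.
move=> t' /andP [t'S t't]; apply/eqP.
by rewrite -[_ == 0]negbK dterm_neq0 (negbTE (others _ t'S t't)).
Qed.

Lemma dmono_zw (u : 'I_n * bool) (q : Edge) V : dmono [set inl u; wgen q] V =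
  if inl u \in V then - (gsign [set inl u] (V :\ inl u) * dgen (wgen q) (V :\ inl u)) else 0.
Proof.
have below_w : below [set inl u; wgen q] (wgen q) = [set inl u].
  apply/setP => g; rewrite !inE; case: (g =P inl u) => [->|_] /=.
    by rewrite grank_inl_lt_inr.
  by case: (g =P wgen q) => [->|]; rewrite ?ltnn.
have above_w : above [set inl u; wgen q] (wgen q) = set0.
  apply/setP => g; rewrite !inE; case: (g =P inl u) => [->|_] /=.
    by rewrite ltnNge ltnW // grank_inl_lt_inr.
  by case: (g =P wgen q) => [->|]; rewrite ?ltnn.
have dterm_u : dterm [set inl u; wgen q] (inl u) V = 0.
  by rewrite dterm_coef; case: ifP; rewrite // ffunE mulr0.
rewrite dmono_coef big_setU1 ?inE //= big_set1 dterm_u add0r dterm_coef below_w above_w.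
rewrite setUC setU1K ?inE // sub1set; case: ifP => // _.
by rewrite cards1 expr1 !setD0 gsign0r mulr1 mulN1r mulNr.
Qed.

(** * Test sets *)

Definition vanishes_below (U : {set G}) (c : A) :=
  forall T : {set G}, T \subset U -> c T = 0.

Definition test_set (U : {set G}) := forall q : Edge, wgen q \in U ->
  (forall a b, on_edge a q -> inl (a, b) \notin U) /\ (forall q', wgen q' \in U -> q' = q).

Lemma vanishes_below_amull U (f g : A) : vanishes_below U f -> vanishes_below U (amul f g).
Proof.
move=> hf T hT; rewrite ffunE big1 // => S _; rewrite big1 // => R _.
case: ifP => // /andP[_ /eqP hU].
by rewrite hf ?mulr0 ?mul0r // (subset_trans _ hT) // -hU subsetUl.
Qed.

Lemma vanishes_below_amulr U (f g : A) : vanishes_below U g -> vanishes_below U (amul f g).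
Proof.
move=> hg T hT; rewrite ffunE big1 // => S _; rewrite big1 // => R _.
case: ifP => // /andP[_ /eqP hU].
by rewrite hg ?mulr0 // (subset_trans _ hT) // -hU subsetUr.
Qed.

Lemma vanishes_belowD U (f g : A) :
  vanishes_below U f -> vanishes_below U g -> vanishes_below U (f + g).
Proof. by move=> hf hg T hT; rewrite ffunE hf ?hg ?addr0. Qed.

Lemma omega_supp (i j : 'I_n) (g : G) : isW i j g ->
  exists q : Edge, [/\ g = wgen q, on_edge i q & on_edge j q].
Proof.
case: g => // q /= ijq; exists q; split => //; rewrite /on_edge.
  by case: q ijq => [[k l] kl] /=; case/orP => /eqP [-> ->]; rewrite eqxx ?orbT.
by case: q ijq => [[k l] kl] /=; case/orP => /eqP [-> ->]; rewrite eqxx ?orbT.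
Qed.

Lemma rel_vanishes_below U r : test_set U -> is_rel r -> vanishes_below U r.
Proof.
have linear_rel (b : bool) (i j : 'I_n) : test_set U ->
    vanishes_below U (amul (gen (inl (i, b)) - gen (inl (j, b))) (omega i j)).
  move=> hU T TU; rewrite /omega amul_sumr sum_ffunE big1 // => g.
  case/omega_supp => q [-> iq jq]; rewrite /gen amul_mono_r sub1set.
  case: ifP => // qT; have [ends _] := hU q (subsetP TU _ qT).
  have notin c : on_edge c q -> (T :\ wgen q == [set inl (c, b)]) = false.
    move=> cq; apply/negbTE/eqP => E; have /setD1P [_] : inl (c, b) \in T :\ wgen q.
      by rewrite E set11.
    by move/(subsetP TU); apply/negP/ends.
  by rewrite !ffunE (notin i iq) (notin j jq) subrr mulr0.
have omega_omega i j k l : test_set U -> vanishes_below U (amul (omega i j) (omega k l)).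
  move=> hU T TU; rewrite /omega amul_suml sum_ffunE big1 // => g /omega_supp [q [-> _ _]].
  rewrite amul_sumr sum_ffunE big1 // => h /omega_supp [q' [-> _ _]].
  rewrite amul_gen; case: ifP => // /andP [qq' /eqP ET].
  have qU : wgen q \in U by apply: (subsetP TU); rewrite ET setU11.
  have q'U : wgen q' \in U by apply: (subsetP TU); rewrite ET !inE eqxx orbT.
  by have [_ uniq] := hU q qU; rewrite (uniq q' q'U) eqxx in qq'.
move=> hU [[i [j [_ [->|->]]]]|[i [j [k [_ ->]]]]]; try exact: linear_rel.
by do 2?apply: vanishes_belowD; apply: omega_omega.
Qed.

(* The coefficients at a test set are well-defined linear forms on E_2(n). *)
Lemma in_I_coef_test U (c : A) : test_set U -> in_I c -> c U = 0.
Proof.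
move=> hU [s [rels ->]]; rewrite sum_ffunE; apply: big1_seq => t /andP [_ ts].
by apply: vanishes_below_amull (subxx U); apply/vanishes_below_amulr/rel_vanishes_below/rels.
Qed.

Lemma test_set_xy (U : {set G}) : (forall g, g \in U -> isXY g) -> test_set U.
Proof. by move=> hU q /hU. Qed.

Lemma cocycle_coef_single (a : A) V S0 : in_I (d2 a) -> test_set V ->
  dmono S0 V != 0 -> (forall S, a S != 0 -> dmono S V != 0 -> S = S0) -> a S0 = 0.
Proof.
move=> hI hV hS0 supp; have := in_I_coef_test hV hI.
rewrite d2_coef (bigD1 S0) //= big1 ?addr0 => [/eqP|S SS0].
  by rewrite mulf_eq0 (negbTE hS0) orbF => /eqP.
have [->|/eqP aS] := a S =P 0; first by rewrite mul0r.
have [->|/eqP dS] := dmono S V =P 0; first by rewrite mulr0.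
by rewrite (supp S aS dS) eqxx in SS0.
Qed.

Lemma cocycle_coef_pair (a : A) V S1 S2 : in_I (d2 a) -> test_set V -> S1 != S2 ->
  dmono S1 V = dmono S2 V -> dmono S1 V != 0 ->
  (forall S, a S != 0 -> dmono S V != 0 -> S = S1 \/ S = S2) -> a S1 + a S2 = 0.
Proof.
move=> hI hV S12 d12 hS1 supp; have := in_I_coef_test hV hI.
rewrite d2_coef (bigD1 S1) //= (bigD1 S2) 1?eq_sym //= big1 ?addr0 => [|S /andP [SS1 SS2]].
  by rewrite -d12 -mulrDl => /eqP; rewrite mulf_eq0 (negbTE hS1) orbF => /eqP.
have [->|/eqP aS] := a S =P 0; first by rewrite mul0r.
have [->|/eqP dS] := dmono S V =P 0; first by rewrite mulr0.
by case: (supp S aS dS) => eS; [move: SS1|move: SS2]; rewrite eS eqxx.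
Qed.

Lemma in_I0 : in_I (0 : A).
Proof. by exists [::]; rewrite big_nil. Qed.

Lemma in_ID (x y : A) : in_I x -> in_I y -> in_I (x + y).
Proof.
move=> [s1 [h1 ->]] [s2 [h2 ->]]; exists (s1 ++ s2); split; last by rewrite big_cat.
by move=> t; rewrite mem_cat => /orP [/h1|/h2].
Qed.

Lemma in_I_sum (I : Type) (r : seq I) (F : I -> A) :
  (forall i, in_I (F i)) -> in_I (\sum_(i <- r) F i).
Proof.
move=> h; elim: r => [|i r IH]; first by rewrite big_nil; exact: in_I0.
by rewrite big_cons; apply: in_ID.
Qed.

Lemma E3_vanishes_of_cocycles_in_I (e : rel 'I_n) (p q : int) :
  (forall a : A, inE2 e p q a -> in_I (d2 a) -> in_I a) -> E3_vanishes e p q.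
Proof.
move=> cocycles a ha hI; exists 0; split; first by split => U; rewrite ffunE eqxx.
suff -> : d2 (0 : A) = 0 by rewrite subr0; exact: cocycles.
by apply/ffunP => U; rewrite d2_coef !ffunE big1 // => S _; rewrite ffunE mul0r.
Qed.

(** * Bidegrees (0,1) and (0,2) *)

Definition xy_part (U : {set G}) := [set g in U | isXY g].

Definition omega_part (U : {set G}) := [set g in U | ~~ isXY g].

Lemma setU_xy_omega (U : {set G}) : U = xy_part U :|: omega_part U.
Proof. by apply/setP => g; rewrite !inE; case: (g \in U); case: isXY. Qed.

Lemma xy_partP (U : {set G}) g : g \in xy_part U -> exists u, g = inl u.
Proof. by rewrite inE; case: g => [u|q] /=; rewrite ?andbF // => _; exists u. Qed.

Lemma omega_partP (U : {set G}) g : g \in omega_part U -> exists q, g = wgen q.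
Proof. by rewrite inE; case: g => [u|q] /=; rewrite ?andbF // => _; exists q. Qed.

Lemma homog01_supp (a : A) U : homog 0 1 a -> a U != 0 -> exists q, U = [set wgen q].
Proof.
move=> ha aU; have [hX hW] := ha U aU.
have X0 : xy_part U = set0 by apply: cards0_eq; case: hX.
have /cards1P [w W1] : #|omega_part U| == 1%N by case: hW => ->.
have [q wq] : exists q, w = wgen q by apply: (@omega_partP U); rewrite W1 set11.
by exists q; rewrite [LHS]setU_xy_omega X0 set0U W1 wq.
Qed.

Lemma homog02_supp (a : A) U : homog 0 2 a -> a U != 0 ->
  exists q1 q2, q1 != q2 /\ U = [set wgen q1; wgen q2].
Proof.
move=> ha aU; have [hX hW] := ha U aU.
have X0 : xy_part U = set0 by apply: cards0_eq; case: hX.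
have /cards2P [w1 [w2 [w12 W2]]] : #|omega_part U| == 2%N by case: hW => ->.
have [q1 e1] : exists q, w1 = wgen q by apply: (@omega_partP U); rewrite W2 !inE eqxx.
have [q2 e2] : exists q, w2 = wgen q by apply: (@omega_partP U); rewrite W2 !inE eqxx orbT.
exists q1, q2; split; first by rewrite -inr_eq -e1 -e2.
by rewrite [LHS]setU_xy_omega X0 set0U W2 e1 e2.
Qed.

Lemma homog11_supp (a : A) U : homog 1 1 a -> a U != 0 ->
  exists u q, U = [set inl u; wgen q].
Proof.
move=> ha aU; have [hX hW] := ha U aU.
have /cards1P [z Z1] : #|xy_part U| == 1%N by case: hX => ->.
have /cards1P [w W1] : #|omega_part U| == 1%N by case: hW => ->.
have [u zu] : exists u, z = inl u by apply: (@xy_partP U); rewrite Z1 set11.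
have [q wq] : exists q, w = wgen q by apply: (@omega_partP U); rewrite W1 set11.
by exists u, q; rewrite [LHS]setU_xy_omega Z1 W1 zu wq.
Qed.

Lemma inE2_edge (e : rel 'I_n) p q (a : A) U (r : Edge) : inE2 e p q a -> a U != 0 ->
  wgen r \in U -> e (val r).1 (val r).2.
Proof. by move=> [_ allowed] aU /(subsetP (allowed U aU)); rewrite inE. Qed.

Lemma cocycle01_eq0 (e : rel 'I_n) (a : A) : inE2 e 0 1 a -> in_I (d2 a) -> a = 0.
Proof.
move=> [ha _] hI; apply/ffunP => U; rewrite ffunE; apply/eqP; apply: contraT => aU.
have [q eU] := homog01_supp ha aU; rewrite eU in aU.
set V := [set xgen (val q).1; ygen (val q).2].
have dq : dmono [set wgen q] V != 0.
  apply: (dmono_neq0 (set11 _)); rewrite ?setDv ?sub0set ?setD0 //.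
    by rewrite dgen_xy_neq0 on_edge1 on_edge2.
  by move=> t /set1P ->; rewrite eqxx.
rewrite (cocycle_coef_single hI _ dq) ?eqxx // in aU.
  by apply: test_set_xy => g /set2P [] ->.
move=> S aS /dmono_neq0P [t]; have [r ->] := homog01_supp ha aS.
move=> /set1P -> /andP [_]; rewrite setDv setD0 dgen_xy_neq0 => /andP [kr lr].
by rewrite (on_edge_uniq (edge_neq q) (on_edge1 q) (on_edge2 q) kr lr).
Qed.

Lemma E3_vanishes01 (e : rel 'I_n) : E3_vanishes e 0 1.
Proof.
by apply: E3_vanishes_of_cocycles_in_I => a ha hI; rewrite (cocycle01_eq0 ha hI); exact: in_I0.
Qed.

Definition wxy (h : Edge) (i j : 'I_n) : {set G} := wgen h |: [set xgen i; ygen j].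

Lemma test_set_wxy (h : Edge) (i j : 'I_n) : ~~ on_edge i h -> ~~ on_edge j h ->
  test_set (wxy h i j).
Proof.
move=> ih jh q; rewrite !inE inr_eq orbF => /eqP ->; split; last first.
  by move=> q'; rewrite !inE inr_eq orbF => /eqP.
move=> a b ah; rewrite !inE !inl_eq !xpair_eqE /=.
apply/negP => /orP [/andP [/eqP ai _]|/andP [/eqP aj _]].
  by case/negP: ih; rewrite -ai.
by case/negP: jh; rewrite -aj.
Qed.

Lemma wgen_in_wxy (q h : Edge) (i j : 'I_n) : (wgen q \in wxy h i j) = (q == h).
Proof. by rewrite !inE inr_eq orbF. Qed.

Lemma wxy_setD1 (h : Edge) (i j : 'I_n) : wxy h i j :\ wgen h = [set xgen i; ygen j].
Proof. by rewrite setU1K // !inE. Qed.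

Lemma dmono_ww_neq0 (g h : Edge) (i j : 'I_n) : g != h -> on_edge i g -> on_edge j g ->
  dmono [set wgen g; wgen h] (wxy h i j) != 0.
Proof.
move=> gh ig jg.
have Sg : [set wgen g; wgen h] :\ wgen g = [set wgen h] by rewrite setU1K // inE inr_eq.
apply: (dmono_neq0 (setU11 _ _)); rewrite ?Sg.
- by rewrite sub1set wgen_in_wxy.
- by rewrite wxy_setD1 dgen_xy_neq0 ig.
move=> t /set2P [->|->]; rewrite ?eqxx // => _.
by rewrite setUC setU1K ?inE ?inr_eq 1?eq_sym // sub1set wgen_in_wxy.
Qed.

Lemma dmono_ww_supp (q1 q2 h : Edge) (i j : 'I_n) : q1 != q2 ->
  dmono [set wgen q1; wgen q2] (wxy h i j) != 0 ->
  exists q, [/\ [set wgen q1; wgen q2] = [set wgen q; wgen h], q != h,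
                on_edge i q & on_edge j q].
Proof.
have one_term (q q' : Edge) : q != q' -> [set wgen q; wgen q'] :\ wgen q \subset wxy h i j ->
    dgen (wgen q) (wxy h i j :\: ([set wgen q; wgen q'] :\ wgen q)) != 0 ->
    [/\ q' = h, on_edge i q & on_edge j q].
  move=> qq'; rewrite setU1K ?inE ?inr_eq // sub1set wgen_in_wxy => /eqP ->.
  by rewrite wxy_setD1 dgen_xy_neq0 => /andP [].
move=> q12 /dmono_neq0P [t /set2P [] ->] /andP [sub dt].
  by have [q2h iq jq] := one_term _ _ q12 sub dt; exists q1; rewrite -q2h.
rewrite setUC in sub dt; rewrite eq_sym in q12.
by have [q1h iq jq] := one_term _ _ q12 sub dt; exists q2; rewrite setUC -q1h.
Qed.

Section Bidegree02.
Variables (e : rel 'I_n) (a : A).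
Hypotheses (e_sym : symmetric e) (e_tri : forall i j k, ~~ [&& e i j, e j k & e k i]).
Hypotheses (ha : inE2 e 0 2 a) (hI : in_I (d2 a)).

Lemma coef02_disjoint (g h : Edge) : g != h ->
  ~~ on_edge (val g).1 h -> ~~ on_edge (val g).2 h -> a [set wgen g; wgen h] = 0.
Proof.
move=> gh kh lh; apply: (cocycle_coef_single hI (test_set_wxy kh lh)).
  exact: dmono_ww_neq0 gh (on_edge1 g) (on_edge2 g).
move=> S aS; have [q1 [q2 [q12 ->]]] := homog02_supp ha.1 aS.
case/(dmono_ww_supp q12) => q [-> _ kq lq].
by rewrite (on_edge_uniq (edge_neq g) (on_edge1 g) (on_edge2 g) kq lq).
Qed.

Lemma coef02_eq0 (g h : Edge) : g != h -> a [set wgen g; wgen h] = 0.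
Proof.
move=> gh; apply/eqP; apply: contraT => aU.
have ge : e (val g).1 (val g).2 by apply: inE2_edge ha aU _; rewrite setU11.
have he : e (val h).1 (val h).2 by apply: inE2_edge ha aU _; rewrite !inE eqxx orbT.
have [i [ig ih mh]] : exists i, [/\ on_edge i g, ~~ on_edge i h & on_edge (other_end i g) h].
  have [kh|kh] := boolP (on_edge (val g).1 h); have [lh|lh] := boolP (on_edge (val g).2 h).
  - by rewrite (on_edge_uniq (edge_neq g) (on_edge1 g) (on_edge2 g) kh lh) eqxx in gh.
  - by exists (val g).2; rewrite other_end2 on_edge2.
  - by exists (val g).1; rewrite other_end1 on_edge1.
  - by rewrite coef02_disjoint ?eqxx in aU.
rewrite (cocycle_coef_single hI (test_set_wxy ih ih) (dmono_ww_neq0 gh ig ig)) ?eqxx // in aU.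
move=> S aS; have [q1 [q2 [q12 eS]]] := homog02_supp ha.1 aS; rewrite eS in aS *.
case/(dmono_ww_supp q12) => q [eS' qh iq _]; rewrite eS' in aS *.
suff -> : q = g by [].
have qe : e (val q).1 (val q).2 by apply: inE2_edge ha aS _; rewrite setU11.
set m := other_end i g in mh; set m' := other_end i q.
have mi : m != i by apply: other_end_neq.
have [m'h|m'h] := boolP (on_edge m' h); last first.
  have off c : on_edge c q -> ~~ on_edge c h by case/(on_edge_other iq) => ->.
  by rewrite coef02_disjoint ?off ?on_edge1 ?on_edge2 ?eqxx in aS.
have [mm'|mm'] := eqVneq m m'.
  apply: (on_edge_uniq (other_end_neq iq)) => //; rewrite ?other_end_on //.
  by rewrite -/m' -mm' other_end_on.
case/and3P: (e_tri i m m'); split.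
- by apply: edge_rel e_sym ge _ ig (other_end_on i g); rewrite eq_sym.
- exact: edge_rel e_sym he mm' mh m'h.
- exact: edge_rel e_sym qe (other_end_neq iq) (other_end_on i q) iq.
Qed.

Lemma cocycle02_eq0 : a = 0.
Proof.
apply/ffunP => U; rewrite ffunE; apply/eqP; apply: contraT => aU.
by have [g [h [gh eU]]] := homog02_supp ha.1 aU; rewrite eU coef02_eq0 ?eqxx in aU.
Qed.

End Bidegree02.

Lemma E3_vanishes02 (e : rel 'I_n) : symmetric e ->
  (forall i j k, ~~ [&& e i j, e j k & e k i]) -> E3_vanishes e 0 2.
Proof.
move=> e_sym e_tri; apply: E3_vanishes_of_cocycles_in_I => a ha hI.
by rewrite (cocycle02_eq0 e_sym e_tri ha hI); exact: in_I0.
Qed.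

(** * Bidegree (1,1) *)

Lemma inl_eq_negb (p s : 'I_n) (b : bool) : (inl (p, b) == inl (s, ~~ b) :> G) = false.
Proof. by rewrite inl_eq xpair_eqE; case: b; rewrite andbF. Qed.

Lemma set_zw_eq (z z' : 'I_n * bool) (q q' : Edge) :
  ([set inl z; wgen q] == [set inl z'; wgen q']) = (z == z') && (q == q').
Proof.
apply/eqP/andP => [E|[/eqP-> /eqP->]//].
have /[!inE] zz' : (inl z : G) \in [set inl z'; wgen q'] by rewrite -E setU11.
have /[!inE] qq' : wgen q \in [set inl z'; wgen q'] by rewrite -E !inE eqxx orbT.
by rewrite inl_eq orbF in zz'; rewrite inr_eq in qq'.
Qed.

Definition ztriple (p r s : 'I_n) (b : bool) : {set G} :=
  [set inl (p, b); inl (r, b); inl (s, ~~ b)].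

Lemma in_ztriple_p p r s b : inl (p, b) \in ztriple p r s b.
Proof. by rewrite !inE eqxx. Qed.

Lemma in_ztriple_r p r s b : inl (r, b) \in ztriple p r s b.
Proof. by rewrite !inE eqxx orbT. Qed.

Lemma test_set_ztriple p r s b : test_set (ztriple p r s b).
Proof. by apply: test_set_xy => g; rewrite !inE => /orP [/orP [] |] /eqP ->. Qed.

Lemma dmono_zw_ztriple_supp (z : 'I_n * bool) (q : Edge) p r s b : p != r ->
  dmono [set inl z; wgen q] (ztriple p r s b) != 0 ->
  (z = (p, b) /\ on_edge r q \/ z = (r, b) /\ on_edge p q) /\ on_edge s q.
Proof.
move=> pr; have pr' : inl (p, b) != inl (r, b) :> G by rewrite inl_eq xpair_eqE eqxx andbT.
rewrite dmono_zw; case: ifP => [zV|_]; last by rewrite eqxx.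
rewrite oppr_eq0 mulf_eq0 negb_or gsign_neq0 => /dgen_neq0P [c [d [cq dq VE]]].
have ends t bb : inl (t, bb) \in [set xgen c; ygen d] -> on_edge t q.
  by case/set2P => -[-> _].
move: zV VE; rewrite !inE => /orP [/orP [] |] /eqP [->].
- rewrite set3D1l ?inl_eq_negb // => VE.
  split; [left; split=> //; apply: (ends _ b) | apply: (ends _ (~~ b))];
    by rewrite -VE !inE eqxx ?orbT.
- rewrite set3D1m => [VE||]; [|by rewrite eq_sym|by rewrite inl_eq_negb].
  split; [right; split=> //; apply: (ends _ b) | apply: (ends _ (~~ b))];
    by rewrite -VE !inE eqxx ?orbT.
- rewrite set3D1r => [VE||]; [|by rewrite eq_sym inl_eq_negb..].
  have : (inl (if b then c else d, ~~ b) : G) \in [set inl (p, b); inl (r, b)].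
    by rewrite VE; case: (b); rewrite !inE eqxx ?orbT.
  by rewrite !inE ![_ == inl (_, b)]eq_sym !inl_eq_negb.
Qed.

Lemma omega_edge (q : Edge) : omega (val q).1 (val q).2 = gen (wgen q).
Proof.
rewrite /omega (big_pred1 (wgen q)) // => -[//|q'] /=.
apply/idP/idP => [|/eqP [->]]; last by rewrite -surjective_pairing eqxx.
case/orP => /eqP E.
  by apply/eqP; congr inr; apply: val_inj; exact: etrans E (esym (surjective_pairing _)).
case: q' E => [[k' l'] /= kl'] [ek el]; move: (kl'); rewrite ek el => lk.
by have := ltn_trans lk (valP q); rewrite ltnn.
Qed.

Definition lin_rel (q : Edge) (b : bool) : A :=
  amul (gen (inl ((val q).1, b)) - gen (inl ((val q).2, b))) (omega (val q).1 (val q).2).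

Lemma in_I_lin_rel (c : rat) (q : Edge) b : in_I (ascale c (lin_rel q b)).
Proof.
exists [:: (ascale c (mono set0), lin_rel q b, mono set0)]; split.
  move=> t /[!inE] /eqP -> /=; left; exists (val q).1, (val q).2.
  by split; [exact: edge_neq | case: b; [right | left]].
by rewrite big_seq1 /= mono_set0_r amulZl mono_set0_l.
Qed.

Lemma lin_rel_coef (q : Edge) b U : lin_rel q b U
  = (U == [set inl ((val q).1, b); wgen q])%:R - (U == [set inl ((val q).2, b); wgen q])%:R.
Proof.
have inl_inr (u : 'I_n * bool) : (inl u == wgen q :> G) = false by [].
rewrite /lin_rel omega_edge amulBl coefB !amul_gen !inl_inr /=.
rewrite !gsign_ordered => [|s t /set1P -> /set1P ->|s t /set1P -> /set1P ->];
  rewrite ?grank_inl_lt_inr //.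
by case: (U == _); case: (U == _).
Qed.

Lemma lin_rel_coef_zw (q q0 : Edge) b b0 v :
  lin_rel q b [set inl (v, b0); wgen q0]
  = if (q0 == q) && (b0 == b) then (v == (val q).1)%:R - (v == (val q).2)%:R else 0.
Proof.
rewrite lin_rel_coef !set_zw_eq !xpair_eqE.
by case: (q0 == q); case: (b0 == b); case: (v == _); case: (v == _).
Qed.

Section Bidegree11.
Variables (e : rel 'I_n) (a : A).
Hypotheses (e_sym : symmetric e) (e_tri : forall i j k, ~~ [&& e i j, e j k & e k i]).
Hypotheses (ha : inE2 e 1 1 a) (hI : in_I (d2 a)).

Lemma coef11_off_edge (q : Edge) v b : ~~ on_edge v q -> a [set inl (v, b); wgen q] = 0.
Proof.
move=> vq; apply/eqP; apply: contraT => aS.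
have qe : e (val q).1 (val q).2 by apply: inE2_edge ha aS _; rewrite !inE eqxx orbT.
have [u [uq vu]] : exists u, on_edge u q /\ ~~ e v u.
  have [vk|vk] := boolP (e v (val q).1); last by exists (val q).1; rewrite on_edge1.
  have [vl|vl] := boolP (e v (val q).2); last by exists (val q).2; rewrite on_edge2.
  by case/and3P: (e_tri v (val q).1 (val q).2); split; rewrite // e_sym.
set w := other_end u q; have wq : on_edge w q := other_end_on u q.
have wu : w != u := other_end_neq uq.
have vw : v != w by apply: contraNneq vq => ->.
have uv : u != v by apply: contraNneq vq => <-.
have d0 : dmono [set inl (v, b); wgen q] (ztriple v w u b) != 0.
  rewrite dmono_zw in_ztriple_p set3D1l ?inl_eq_negb ?inl_eq ?xpair_eqE ?eqxx ?andbT //.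
  by rewrite oppr_eq0 mulf_neq0 ?gsign_neq0 // dgen_zz // !mulf_neq0 ?signr_eq0 ?gsign_neq0.
have Vtest : test_set (ztriple v w u b) by apply: test_set_ztriple.
rewrite (cocycle_coef_single hI Vtest d0) ?eqxx // in aS.
move=> S aS' dS; have [z [q' eS]] := homog11_supp ha.1 aS'; rewrite eS in aS' dS *.
have [[[-> wq']|[-> vq']] uq'] := dmono_zw_ztriple_supp vw dS.
  by rewrite (on_edge_uniq wu wq uq wq' uq').
have q'e : e (val q').1 (val q').2 by apply: inE2_edge ha aS' _; rewrite !inE eqxx orbT.
by rewrite (edge_rel e_sym q'e _ vq' uq') 1?eq_sym in vu.
Qed.

(* Both coefficients see the same d_2-image, since (x_k - x_l) d omega_kl = 0. *)
Lemma coef11_ends (q : Edge) b :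
  a [set inl ((val q).1, b); wgen q] + a [set inl ((val q).2, b); wgen q] = 0.
Proof.
set k := (val q).1; set l := (val q).2; have kl : k != l := edge_neq q.
have [kq lq] : on_edge k q /\ on_edge l q by rewrite on_edge1 on_edge2.
have kl' : inl (k, b) != inl (l, b) :> G by rewrite inl_eq xpair_eqE eqxx andbT.
have Vtest : test_set (ztriple k l k b) by apply: test_set_ztriple.
apply: (cocycle_coef_pair hI Vtest).
- by rewrite set_zw_eq xpair_eqE (negbTE kl).
- rewrite !dmono_zw in_ztriple_p in_ztriple_r set3D1l ?inl_eq_negb //.
  rewrite set3D1m ?inl_eq_negb 1?eq_sym //.
  rewrite !dgen_zz // eqxx eq_sym kl expr0 expr1 mul1r mulN1r.
  have swap := gsign_swap3 kl' (negbT (inl_eq_negb l k b)) (negbT (inl_eq_negb k k b)).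
  by rewrite mulrN mulrN opprK mulrCA swap mulrN mulrCA.
- rewrite dmono_zw in_ztriple_p set3D1l ?inl_eq_negb // oppr_eq0 mulf_neq0 ?gsign_neq0 //.
  by rewrite dgen_zz // !mulf_neq0 ?signr_eq0 ?gsign_neq0.
move=> S aS dS; have [z [q' eS]] := homog11_supp ha.1 aS; rewrite eS in aS dS *.
have [[[-> lq']|[zl kq']] kq''] := dmono_zw_ztriple_supp kl dS.
  by left; rewrite (on_edge_uniq kl kq lq kq'' lq').
rewrite zl in aS *.
have [lq'|lq'] := boolP (on_edge l q'); last by rewrite coef11_off_edge ?eqxx in aS.
by right; rewrite (on_edge_uniq kl kq lq kq' lq').
Qed.

Lemma coef11_first_end (q : Edge) b v :
  a [set inl ((val q).1, b); wgen q] * ((v == (val q).1)%:R - (v == (val q).2)%:R)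
  = a [set inl (v, b); wgen q].
Proof.
have kl := edge_neq q; have ends := coef11_ends q b.
have [->|vk] := eqVneq v (val q).1; first by rewrite ?eqxx (negbTE kl) subr0 mulr1.
have [->|vl] := eqVneq v (val q).2.
  by rewrite sub0r mulrN1; apply/eqP; rewrite eq_sym -addr_eq0 addrC ends.
rewrite subrr mulr0 coef11_off_edge //.
by rewrite /on_edge negb_or vk vl.
Qed.

Lemma cocycle11_expansion :
  a = \sum_(q : Edge) \sum_(b : bool) ascale (a [set inl ((val q).1, b); wgen q]) (lin_rel q b).
Proof.
apply/ffunP => U; rewrite sum_ffunE; under eq_bigr do rewrite sum_ffunE.
case: (pickP (fun uq : ('I_n * bool) * Edge => U == [set inl uq.1; wgen uq.2]))
  => [[[v b0] q0] /eqP /= ->|none].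
  rewrite (bigD1 q0) //= [X in _ + X]big1 => [|q qq0]; last first.
    by apply: big1 => b _; rewrite ffunE lin_rel_coef_zw eq_sym (negbTE qq0) mulr0.
  rewrite addr0 (bigD1 b0) //= [X in _ + X]big1 => [|b bb0]; last first.
    by rewrite ffunE lin_rel_coef_zw eq_sym (negbTE bb0) andbF mulr0.
  by rewrite addr0 ffunE lin_rel_coef_zw !eqxx coef11_first_end.
have none' u q : (U == [set inl u; wgen q]) = false := none (u, q).
have -> : a U = 0.
  by apply/eqP; apply: contraT => /(homog11_supp ha.1) [u [q /eqP]]; rewrite none'.
apply/esym/big1 => q _; apply: big1 => b _.
by rewrite ffunE lin_rel_coef !none' subrr mulr0.
Qed.

Lemma cocycle11_in_I : in_I a.
Proof.
by rewrite cocycle11_expansion; apply: in_I_sum => q; apply: in_I_sum => b; exact: in_I_lin_rel.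
Qed.

End Bidegree11.

Lemma E3_vanishes11 (e : rel 'I_n) : symmetric e ->
  (forall i j k, ~~ [&& e i j, e j k & e k i]) -> E3_vanishes e 1 1.
Proof.
move=> e_sym e_tri; apply: E3_vanishes_of_cocycles_in_I => a ha hI.
exact: cocycle11_in_I e_sym e_tri ha hI.
Qed.

End E2.

(* Irreflexivity is automatic in this model: the omega generators are indexed by pairs i < j. *)
Theorem lemma4p4 (n : nat) (e : rel 'I_n) :
  symmetric e -> irreflexive e ->
  (forall i j k : 'I_n, ~~ [&& e i j, e j k & e k i]) ->
  [/\ E3_vanishes e 0 1, E3_vanishes e 0 2 & E3_vanishes e 1 1].
Proof.
move=> e_sym _ e_tri; split.
- exact: E3_vanishes01.
- exact: E3_vanishes02.
- exact: E3_vanishes11.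
Qed.
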